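(* Let $\mathcal{C}$ be a deflation-exact category and let $\mathcal{A}\subseteq\mathcal{C}$ be an admissibly deflation-percolating subcategory. Then $S_{\mathcal{A}}=S_{\mathcal{A}}\cap\mathrm{Adm}(\mathcal{C})$; in particular every weak isomorphism is admissible. Moreover, $S_{\mathcal{A}}$ is a right multiplicative system in $\mathcal{C}$ such that the commutative square in axiom RMS2 can always be chosen to be a pullback square; in particular, pullbacks along weak isomorphisms exist.
   Context: A conflation category is an additive category together with a class of kernel-cokernel pairs $A\xrightarrow{f}B\xrightarrow{g}C$ (i.e. $f=\ker g$ and $g=\operatorname{coker} f$), closed under isomorphisms, called conflations; the first morphism of a conflation is called an inflation ($\rightarrowtail$) and the second a deflation ($\twoheadrightarrow$). A deflation-exact category is a conflation category satisfying: (R0) $1_0$ is a deflation; (R1) the composition of two deflations is a deflation; (R2) the pullback of a deflation along any morphism exists and is a deflation. A morphism is admissible if it factors as a deflation followed by an inflation; $\mathrm{Adm}(\mathcal{C})$ is the set of admissible morphisms. A non-empty full subcategory $\mathcal{A}$ of a conflation category $\mathcal{C}$ is admissibly deflation-percolating if: (A1) for every conflation $A'\rightarrowtail A\twoheadrightarrow A''$ in $\mathcal{C}$, $A\in\mathcal{A}$ iff $A',A''\in\mathcal{A}$; (A2) every morphism $C\to A$ with $A\in\mathcal{A}$ factors as a deflation $C\twoheadrightarrow A'$ followed by an inflation $A'\rightarrowtail A$ with $A'\in\mathcal{A}$; (A3) if $a\colon C\rightarrowtail D$ is an inflation and $b\colon C\twoheadrightarrow A$ is a deflation with $A\in\mathcal{A}$,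 then the pushout of $a$ along $b$ exists and in the pushout square the map $D\to P$ is a deflation and $A\to P$ is an inflation. An $\mathcal{A}^{-1}$-inflation is an inflation whose cokernel lies in $\mathcal{A}$; an $\mathcal{A}^{-1}$-deflation is a deflation whose kernel lies in $\mathcal{A}$. The set $S_{\mathcal{A}}$ of weak isomorphisms consists of all finite composites of $\mathcal{A}^{-1}$-inflations and $\mathcal{A}^{-1}$-deflations. A set $S$ of morphisms is a right multiplicative system if: (RMS1) identities are in $S$ and $S$ is closed under composition; (RMS2) for every $f\colon Z\to W$ and $s\colon Y\to W$ with $s\in S$ there exist $t\colon X\to Z$ in $S$ and $g\colon X\to Y$ with $fg'$... precisely $f t = s g$; (RMS3) if $f,g\colon X\to Y$ and $s\in S$ with source $Y$ satisfy $sf=sg$, then there is $t\in S$ with target $X$ such that $ft=gt$. *)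

From HB Require Import structures.
From mathcomp Require Import all_boot ssralg.
Set Implicit Arguments. Unset Strict Implicit. Unset Printing Implicit Defensive.
Import GRing.Theory.
Local Open Scope ring_scope.

Record AddCat := {
  Ob :> Type;
  Mor : Ob -> Ob -> zmodType;
  idm : forall X, Mor X X;
  comp : forall X Y Z, Mor Y Z -> Mor X Y -> Mor X Z;
  comp_assoc : forall X Y Z W (h : Mor Z W) (g : Mor Y Z) (f : Mor X Y),
      comp h (comp g f) = comp (comp h g) f;
  comp_id_l : forall X Y (f : Mor X Y), comp (idm Y) f = f;
  comp_id_r : forall X Y (f : Mor X Y), comp f (idm X) = f;
  comp_addl : forall X Y Z (g1 g2 : Mor Y Z) (f : Mor X Y),
      comp (g1 + g2) f = comp g1 f + comp g2 f;
  comp_addr : forall X Y Z (g : Mor Y Z) (f1 f2 : Mor X Y),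
      comp g (f1 + f2) = comp g f1 + comp g f2;
  zero_ob : Ob;
  zero_ob_init : forall X (f : Mor zero_ob X), f = 0;
  zero_ob_term : forall X (f : Mor X zero_ob), f = 0;
  biproduct : forall X Y, exists P (i1 : Mor X P) (i2 : Mor Y P)
      (p1 : Mor P X) (p2 : Mor P Y),
      [/\ comp p1 i1 = idm X, comp p2 i2 = idm Y, comp p1 i2 = 0,
          comp p2 i1 = 0 & comp i1 p1 + comp i2 p2 = idm P]
}.

Arguments Mor {_}.
Arguments idm {_}.
Arguments comp {_ _ _ _}.
Arguments zero_ob {_}.

Section Basic.
Variable C : AddCat.

Definition is_iso (X Y : C) (f : Mor X Y) : Prop :=
  exists g : Mor Y X, comp g f = idm X /\ comp f g = idm Y.

Definition is_kernel (A B D : C) (f : Mor A B) (g : Mor B D) : Prop :=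
  comp g f = 0 /\
  forall T (h : Mor T B), comp g h = 0 ->
    exists u : Mor T A, comp f u = h /\ forall u' : Mor T A, comp f u' = h -> u' = u.

Definition is_cokernel (A B D : C) (f : Mor A B) (g : Mor B D) : Prop :=
  comp g f = 0 /\
  forall T (h : Mor B T), comp h f = 0 ->
    exists u : Mor D T, comp u g = h /\ forall u' : Mor D T, comp u' g = h -> u' = u.

Definition is_kernel_cokernel_pair (A B D : C) (f : Mor A B) (g : Mor B D) : Prop :=
  is_kernel f g /\ is_cokernel f g.

Definition is_pullback (P Y Z W : C) (f : Mor Z W) (s : Mor Y W)
    (t : Mor P Z) (g : Mor P Y) : Prop :=
  comp f t = comp s g /\
  forall Q (t' : Mor Q Z) (g' : Mor Q Y), comp f t' = comp s g' ->
    exists u : Mor Q P, (comp t u = t' /\ comp g u = g') /\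
      forall u' : Mor Q P, comp t u' = t' -> comp g u' = g' -> u' = u.

Definition is_pushout (X D A P : C) (a : Mor X D) (b : Mor X A)
    (a' : Mor D P) (b' : Mor A P) : Prop :=
  comp a' a = comp b' b /\
  forall Q (a'' : Mor D Q) (b'' : Mor A Q), comp a'' a = comp b'' b ->
    exists u : Mor P Q, (comp u a' = a'' /\ comp u b' = b'') /\
      forall u' : Mor P Q, comp u' a' = a'' -> comp u' b' = b'' -> u' = u.

End Basic.

Record ConflCat := {
  cc_cat :> AddCat;
  confl : forall A B D : cc_cat, Mor A B -> Mor B D -> Prop;
  confl_kc : forall A B D (f : Mor A B) (g : Mor B D),
      confl f g -> is_kernel_cokernel_pair f g;
  confl_iso : forall A B D A' B' D' (f : Mor A B) (g : Mor B D)
      (f' : Mor A' B') (g' : Mor B' D') (a : Mor A A') (b : Mor B B') (c : Mor D D'),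
      confl f g -> is_iso a -> is_iso b -> is_iso c ->
      comp b f = comp f' a -> comp c g = comp g' b -> confl f' g'
}.

Arguments confl {_ _ _ _}.

Section Conflations.
Variable C : ConflCat.

Definition inflation (A B : C) (f : Mor A B) : Prop :=
  exists D (g : Mor B D), confl f g.

Definition deflation (B D : C) (g : Mor B D) : Prop :=
  exists A (f : Mor A B), confl f g.

Definition admissible (X Y : C) (m : Mor X Y) : Prop :=
  exists M (d : Mor X M) (i : Mor M Y), deflation d /\ inflation i /\ m = comp i d.

Definition deflation_exact : Prop :=
  [/\ deflation (idm (@zero_ob C)),
      (forall X Y Z (g : Mor Y Z) (f : Mor X Y),
          deflation f -> deflation g -> deflation (comp g f))
    & (forall B D D' (g : Mor B D) (h : Mor D' D), deflation g ->
          exists P (p : Mor P D') (q : Mor P B),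
            is_pullback h g p q /\ deflation p)].

(* A full subcategory is given by a predicate on objects. *)
Definition adm_deflation_percolating (SA : C -> Prop) : Prop :=
  [/\ (exists X, SA X),
      (forall A' A A'' (f : Mor A' A) (g : Mor A A''), confl f g ->
          (SA A <-> SA A' /\ SA A'')),
      (forall X A (m : Mor X A), SA A ->
          exists A' (d : Mor X A') (i : Mor A' A),
            [/\ SA A', deflation d, inflation i & m = comp i d])
    &
      (forall X D A (a : Mor X D) (b : Mor X A), inflation a -> deflation b -> SA A ->
          exists P (a' : Mor D P) (b' : Mor A P),
            [/\ is_pushout a b a' b', deflation a' & inflation b'])].

Definition A_inflation (SA : C -> Prop) (X Y : C) (f : Mor X Y) : Prop :=
  exists D (g : Mor Y D), confl f g /\ SA D.

Definition A_deflation (SA : C -> Prop) (X Y : C) (g : Mor X Y) : Prop :=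
  exists K (f : Mor K X), confl f g /\ SA K.

Inductive weak_iso (SA : C -> Prop) : forall X Y : C, Mor X Y -> Prop :=
  | wi_infl : forall X Y (f : Mor X Y), A_inflation SA f -> weak_iso SA f
  | wi_defl : forall X Y (f : Mor X Y), A_deflation SA f -> weak_iso SA f
  | wi_comp : forall X Y Z (g : Mor Y Z) (f : Mor X Y),
      weak_iso SA f -> weak_iso SA g -> weak_iso SA (comp g f).

Definition right_mult_system_pullback (S : forall X Y : C, Mor X Y -> Prop) : Prop :=
  [/\ (forall X, S X X (idm X)),
      (forall X Y Z (g : Mor Y Z) (f : Mor X Y), S _ _ f -> S _ _ g -> S _ _ (comp g f)),
      (forall Z W Y (f : Mor Z W) (s : Mor Y W), S _ _ s ->
          exists X (t : Mor X Z) (g : Mor X Y),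
            [/\ S _ _ t, comp f t = comp s g & is_pullback f s t g])
    & (forall X Y V (f g : Mor X Y) (s : Mor Y V), S _ _ s -> comp s f = comp s g ->
          exists X' (t : Mor X' X), S _ _ t /\ comp f t = comp g t)].

End Conflations.

(** Every weak isomorphism factors as an A^{-1}-deflation followed by an
   A^{-1}-inflation: both classes contain the identities and are closed under
   composition, and an A^{-1}-inflation followed by an A^{-1}-deflation can be
   rewritten as an A^{-1}-deflation followed by an A^{-1}-inflation using the
   pushout of (A3).  Admissibility is then immediate.  For (RMS2), an
   A^{-1}-deflation pulls back to an A^{-1}-deflation by (R2), an
   A^{-1}-inflation [i] with cokernel [c] pulls back along [f] to the kernel of
   the deflation part of the (A2)-factorisation of [c f], and pullback squares
   paste.  For (RMS3), if [i d f = i d g] then [f - g] factors through the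
   kernel of [d], an object of A; the kernel of the deflation part of the
   (A2)-factorisation of that map is an A^{-1}-inflation equalising [f] and [g]. *)
From mathcomp Require Import all_boot ssralg.
Set Implicit Arguments. Unset Strict Implicit. Unset Printing Implicit Defensive.
Import GRing.Theory.
Local Open Scope ring_scope.

Section AdditiveCategory.
Variable C : AddCat.

Lemma comp0l (X Y Z : C) (f : Mor X Y) : comp (0 : Mor Y Z) f = 0.
Proof. by apply: (addIr (comp (0 : Mor Y Z) f)); rewrite -comp_addl !add0r. Qed.

Lemma comp0r (X Y Z : C) (g : Mor Y Z) : comp g (0 : Mor X Y) = 0.
Proof. by apply: (addIr (comp g (0 : Mor X Y))); rewrite -comp_addr !add0r. Qed.

Lemma compBl (X Y Z : C) (g1 g2 : Mor Y Z) (f : Mor X Y) :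
  comp (g1 - g2) f = comp g1 f - comp g2 f.
Proof. by apply: (addIr (comp g2 f)); rewrite -comp_addl !subrK. Qed.

Lemma compBr (X Y Z : C) (g : Mor Y Z) (f1 f2 : Mor X Y) :
  comp g (f1 - f2) = comp g f1 - comp g f2.
Proof. by apply: (addIr (comp g f2)); rewrite -comp_addr !subrK. Qed.

Definition mono (A B : C) (f : Mor A B) :=
  forall T (x y : Mor T A), comp f x = comp f y -> x = y.

Definition epi (A B : C) (f : Mor A B) :=
  forall T (x y : Mor B T), comp x f = comp y f -> x = y.

Lemma mono_from_eq0 (A B : C) (f : Mor A B) :
  (forall T (x : Mor T A), comp f x = 0 -> x = 0) -> mono f.
Proof.
move=> f0 T x y E; apply/eqP; rewrite -subr_eq0; apply/eqP/f0.
by rewrite compBr E subrr.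
Qed.

Lemma mono_eq0 (A B T : C) (f : Mor A B) (x : Mor T A) : mono f -> comp f x = 0 -> x = 0.
Proof. by move=> Mf E; apply: Mf; rewrite E comp0r. Qed.

Lemma mono_comp (A B D : C) (f : Mor A B) (g : Mor B D) :
  mono f -> mono g -> mono (comp g f).
Proof. by move=> Mf Mg T x y; rewrite -!comp_assoc => /Mg /Mf. Qed.

Lemma epi_comp (A B D : C) (f : Mor A B) (g : Mor B D) :
  epi f -> epi g -> epi (comp g f).
Proof. by move=> Ef Eg T x y; rewrite !comp_assoc => /Ef /Eg. Qed.

Lemma epi_of_comp (A B D : C) (f : Mor A B) (g : Mor B D) : epi (comp g f) -> epi g.
Proof. by move=> Egf T x y E; apply: Egf; rewrite !comp_assoc E. Qed.

Lemma iso_id (X : C) : is_iso (idm X).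
Proof. by exists (idm X); rewrite comp_id_l. Qed.

Lemma kernel_mono (A B D : C) (f : Mor A B) (g : Mor B D) : is_kernel f g -> mono f.
Proof.
case=> gf0 univ T x y E.
have gfy0 : comp g (comp f y) = 0 by rewrite comp_assoc gf0 comp0l.
have [u [_ u_uniq]] := univ T _ gfy0.
by rewrite (u_uniq x E) (u_uniq y erefl).
Qed.

Lemma cokernel_epi (A B D : C) (f : Mor A B) (g : Mor B D) : is_cokernel f g -> epi g.
Proof.
case=> gf0 univ T x y E.
have ygf0 : comp (comp y g) f = 0 by rewrite -comp_assoc gf0 comp0r.
have [u [_ u_uniq]] := univ T _ ygf0.
by rewrite (u_uniq x E) (u_uniq y erefl).
Qed.

Lemma kernel_lift (A B D T : C) (f : Mor A B) (g : Mor B D) (h : Mor T B) :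
  is_kernel f g -> comp g h = 0 -> exists u, comp f u = h.
Proof. by case=> _ univ /univ [u [? _]]; exists u. Qed.

Lemma cokernel_desc (A B D T : C) (f : Mor A B) (g : Mor B D) (h : Mor B T) :
  is_cokernel f g -> comp h f = 0 -> exists u, comp u g = h.
Proof. by case=> _ univ /univ [u [? _]]; exists u. Qed.

Lemma kernel_unique (A A' B D : C) (f : Mor A B) (f' : Mor A' B) (g : Mor B D) :
  is_kernel f g -> is_kernel f' g -> exists a : Mor A A', is_iso a /\ comp f' a = f.
Proof.
move=> Kf Kf'.
have [a Ea] := kernel_lift Kf' Kf.1.
have [b Eb] := kernel_lift Kf Kf'.1.
exists a; split=> //; exists b; split.
- by apply: (kernel_mono Kf); rewrite comp_assoc Eb Ea comp_id_r.
- by apply: (kernel_mono Kf'); rewrite comp_assoc Ea Eb comp_id_r.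
Qed.

Lemma cokernel_unique (A B D D' : C) (f : Mor A B) (g : Mor B D) (g' : Mor B D') :
  is_cokernel f g -> is_cokernel f g' -> exists c : Mor D D', is_iso c /\ comp c g = g'.
Proof.
move=> Kg Kg'.
have [a Ea] := cokernel_desc Kg Kg'.1.
have [b Eb] := cokernel_desc Kg' Kg.1.
exists a; split=> //; exists b; split.
- by apply: (cokernel_epi Kg); rewrite -comp_assoc Ea Eb comp_id_l.
- by apply: (cokernel_epi Kg'); rewrite -comp_assoc Eb Ea comp_id_l.
Qed.

Lemma kernel0_id (X : C) : is_kernel (0 : Mor zero_ob X) (idm X).
Proof.
split=> [|T h]; first by rewrite comp0r.
rewrite comp_id_l => ->; exists 0; split=> [|u _]; first by rewrite comp0r.
exact: zero_ob_term.
Qed.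

Lemma pullback_sym (P Y Z W : C) (f : Mor Z W) (s : Mor Y W) (t : Mor P Z) (g : Mor P Y) :
  is_pullback f s t g -> is_pullback s f g t.
Proof.
case=> E univ; split=> [|Q t' g' E']; first by rewrite E.
have [u [[U1 U2] u_uniq]] := univ Q g' t' (esym E').
by exists u; split=> // u' Et Eg; apply: u_uniq.
Qed.

Lemma pullback_mono (P Y Z W : C) (f : Mor Z W) (s : Mor Y W) (t : Mor P Z) (g : Mor P Y) :
  is_pullback f s t g -> mono s -> mono t.
Proof.
case=> E univ Ms T x y Exy.
have Efs : comp f (comp t y) = comp s (comp g y) by rewrite !comp_assoc E.
have [u [_ u_uniq]] := univ T _ _ Efs.
have Egxy : comp g x = comp g y by apply: Ms; rewrite !comp_assoc -E -!comp_assoc Exy.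
by rewrite (u_uniq x Exy Egxy) (u_uniq y erefl erefl).
Qed.

Lemma pullback_kernel_leg (P Y Z W V : C) (f : Mor Z W) (s : Mor Y W) (w : Mor W V)
    (t : Mor P Z) (g : Mor P Y) :
  is_kernel s w -> is_pullback f s t g -> is_kernel t (comp w f).
Proof.
move=> Ks PB; have [E univ] := PB.
split=> [|T h Eh]; first by rewrite -comp_assoc E comp_assoc Ks.1 comp0l.
rewrite -comp_assoc in Eh; have [y Ey] := kernel_lift Ks Eh.
have [u [[U1 _] _]] := univ T h y (esym Ey).
exists u; split=> // u' Eu'.
by apply: (pullback_mono PB (kernel_mono Ks)); rewrite U1.
Qed.

Lemma pullback_kernel (A B D D' P : C) (f : Mor A B) (g : Mor B D)
    (h : Mor D' D) (p : Mor P D') (q : Mor P B) :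
  is_kernel f g -> is_pullback h g p q -> exists k : Mor A P, is_kernel k p.
Proof.
move=> Kf [E univ].
have E0 : comp h (0 : Mor A D') = comp g f by rewrite comp0r Kf.1.
have [k [[K1 K2] _]] := univ A 0 f E0.
exists k; split=> // T x Ex.
have Eg : comp g (comp q x) = 0 by rewrite comp_assoc -E -comp_assoc Ex comp0r.
have [y Ey] := kernel_lift Kf Eg.
have Ex' : comp h (comp p x) = comp g (comp q x) by rewrite !comp_assoc E.
have [u [_ u_uniq]] := univ T _ _ Ex'.
have Eky : comp k y = x.
  rewrite (u_uniq x erefl erefl); apply: u_uniq.
  - by rewrite comp_assoc K1 comp0l Ex.
  - by rewrite comp_assoc K2 Ey.
exists y; split=> // y' Ey'.
by apply: (kernel_mono Kf); rewrite -K2 -!comp_assoc Ey' Eky.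
Qed.

Lemma pullback_paste (Z W M Z' Y P : C) (f : Mor Z W) (i : Mor M W) (t : Mor Z' Z)
    (g : Mor Z' M) (d : Mor Y M) (p : Mor P Z') (q : Mor P Y) :
  is_pullback f i t g -> is_pullback g d p q -> is_pullback f (comp i d) (comp t p) q.
Proof.
move=> [E1 univ1] [E2 univ2]; split.
  by rewrite comp_assoc E1 -comp_assoc E2 comp_assoc.
move=> Q t' g' E.
have E' : comp f t' = comp i (comp d g') by rewrite E -comp_assoc.
have [u1 [[U1t U1g] u1_uniq]] := univ1 Q t' (comp d g') E'.
have [u2 [[U2p U2q] u2_uniq]] := univ2 Q u1 g' U1g.
exists u2; split=> [|u' Et Eq]; first by rewrite -comp_assoc U2p U1t.
apply: u2_uniq => //; apply: u1_uniq; first by rewrite comp_assoc.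
by rewrite comp_assoc E2 -comp_assoc Eq.
Qed.

End AdditiveCategory.

Section ConflationCategory.
Variable C : ConflCat.

Lemma confl_kernel (A B D : C) (f : Mor A B) (g : Mor B D) : confl f g -> is_kernel f g.
Proof. by case/confl_kc. Qed.

Lemma confl_cokernel (A B D : C) (f : Mor A B) (g : Mor B D) : confl f g -> is_cokernel f g.
Proof. by case/confl_kc. Qed.

Lemma confl_mono (A B D : C) (f : Mor A B) (g : Mor B D) : confl f g -> mono f.
Proof. by move/confl_kernel/kernel_mono. Qed.

Lemma confl_epi (A B D : C) (f : Mor A B) (g : Mor B D) : confl f g -> epi g.
Proof. by move/confl_cokernel/cokernel_epi. Qed.

Lemma confl_comp0 (A B D : C) (f : Mor A B) (g : Mor B D) : confl f g -> comp g f = 0.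
Proof. by case/confl_kernel. Qed.

Lemma inflation_mono (A B : C) (f : Mor A B) : inflation f -> mono f.
Proof. by case=> D [g /confl_mono]. Qed.

Lemma confl_of_kernel (A A' B D : C) (f : Mor A B) (f' : Mor A' B) (g : Mor B D) :
  confl f g -> is_kernel f' g -> confl f' g.
Proof.
move=> Cf Kf'; have [a [Ia Ea]] := kernel_unique (confl_kernel Cf) Kf'.
apply: (confl_iso (a := a) (b := idm B) (c := idm D) Cf Ia (iso_id _) (iso_id _)).
- by rewrite comp_id_l Ea.
- by rewrite comp_id_l comp_id_r.
Qed.

Lemma confl_of_cokernel (A B D D' : C) (f : Mor A B) (g : Mor B D) (g' : Mor B D') :
  confl f g -> is_cokernel f g' -> confl f g'.
Proof.
move=> Cf Kg'; have [c [Ic Ec]] := cokernel_unique (confl_cokernel Cf) Kg'.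
apply: (confl_iso (a := idm A) (b := idm B) (c := c) Cf (iso_id _) (iso_id _) Ic).
- by rewrite comp_id_l comp_id_r.
- by rewrite comp_id_r Ec.
Qed.

Lemma deflation_kernel_confl (A B D : C) (f : Mor A B) (g : Mor B D) :
  deflation g -> is_kernel f g -> confl f g.
Proof. by case=> A0 [f0 Cf0] /(confl_of_kernel Cf0). Qed.

Lemma inflation_cokernel_confl (A B D : C) (f : Mor A B) (g : Mor B D) :
  inflation f -> is_cokernel f g -> confl f g.
Proof. by case=> D0 [g0 Cg0] /(confl_of_cokernel Cg0). Qed.

Lemma confl_comp_iso (A B B' D : C) (f : Mor A B) (g : Mor B D) (p : Mor B' B) (p' : Mor B B') :
  confl f g -> comp p p' = idm B -> comp p' p = idm B' -> confl (comp p' f) (comp g p).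
Proof.
move=> Cf pp' p'p.
apply: (confl_iso (a := idm A) (b := p') (c := idm D) Cf (iso_id _) _ (iso_id _)).
- by exists p.
- by rewrite comp_id_r.
- by rewrite comp_id_l -comp_assoc pp' comp_id_r.
Qed.

Lemma inflation_epi_iso (A B : C) (m : Mor A B) :
  inflation m -> epi m -> is_iso m.
Proof.
case=> D [c Cm] Em.
have c0 : c = 0 by apply: Em; rewrite (confl_comp0 Cm) comp0l.
have c_id0 : comp c (idm B) = 0 by rewrite c0 comp0l.
have [u Eu] := kernel_lift (confl_kernel Cm) c_id0.
exists u; split=> //.
by apply: (confl_mono Cm); rewrite comp_assoc Eu comp_id_l comp_id_r.
Qed.

Lemma pushout_cokernel (X D V A P : C) (a : Mor X D) (c : Mor D V) (b : Mor X A)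
    (a' : Mor D P) (b' : Mor A P) :
  confl a c -> is_pushout a b a' b' ->
  exists r : Mor P V, [/\ comp r a' = c, comp r b' = 0 & is_cokernel b' r].
Proof.
move=> Ca [E univ].
have E0 : comp c a = comp (0 : Mor A V) b by rewrite comp0l (confl_comp0 Ca).
have [r [[Ra Rb] _]] := univ V c 0 E0.
exists r; split=> //; split=> // T x Ex.
have Exa : comp (comp x a') a = 0 by rewrite -comp_assoc E comp_assoc Ex comp0l.
have [v Ev] := cokernel_desc (confl_cokernel Ca) Exa.
have Exx : comp (comp x a') a = comp (comp x b') b by rewrite -!comp_assoc E.
have [u [_ u_uniq]] := univ T _ _ Exx.
have Evr : comp v r = x.
  rewrite (u_uniq x erefl erefl); apply: u_uniq.
  - by rewrite -comp_assoc Ra Ev.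
  - by rewrite -comp_assoc Rb comp0r Ex.
exists v; split=> // v' Ev'.
by apply: (confl_epi Ca); rewrite -Ra !comp_assoc Ev' Evr.
Qed.

Lemma pushout_kernel (X D V A P K : C) (a : Mor X D) (c : Mor D V) (b : Mor X A)
    (a' : Mor D P) (b' : Mor A P) (k : Mor K X) :
  confl a c -> is_pushout a b a' b' -> mono b' -> is_kernel k b -> is_kernel (comp a k) a'.
Proof.
move=> Ca PO Mb' Kk.
have [r [Ra _ _]] := pushout_cokernel Ca PO.
have [E _] := PO.
split=> [|T h Eh]; first by rewrite comp_assoc E -comp_assoc Kk.1 comp0r.
have Ech : comp c h = 0 by rewrite -Ra -comp_assoc Eh comp0r.
have [h' Eh'] := kernel_lift (confl_kernel Ca) Ech.
have Ebh' : comp b h' = 0 by apply: (mono_eq0 Mb'); rewrite comp_assoc -E -comp_assoc Eh' Eh.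
have [h'' Eh''] := kernel_lift Kk Ebh'.
exists h''; split=> [|u' Eu']; first by rewrite -comp_assoc Eh'' Eh'.
apply: (mono_comp (kernel_mono Kk) (confl_mono Ca)).
by rewrite Eu' -comp_assoc Eh'' Eh'.
Qed.

Lemma kernel_of_deflation_cover (X Z V : C) (m : Mor X Z) (w : Mor Z V) :
  mono m -> comp w m = 0 ->
  (forall T (h : Mor T Z), comp w h = 0 ->
     exists Q (p : Mor Q T) (g : Mor Q X), deflation p /\ comp m g = comp h p) ->
  is_kernel m w.
Proof.
move=> Mm wm0 cover; split=> // T h /cover [Q [p [g [[L [k Ck]] Emg]]]].
have gk0 : comp g k = 0.
  by apply: (mono_eq0 Mm); rewrite comp_assoc Emg -comp_assoc (confl_comp0 Ck) comp0r.
have [g' Eg'] := cokernel_desc (confl_cokernel Ck) gk0.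
have Emg' : comp m g' = h by apply: (confl_epi Ck); rewrite -comp_assoc Eg' Emg.
by exists g'; split=> // u Eu; apply: Mm; rewrite Eu Emg'.
Qed.

End ConflationCategory.

Section Percolating.
Variable C : ConflCat.
Hypothesis R0 : deflation (idm (@zero_ob C)).
Hypothesis R1 : forall (X Y Z : C) (g : Mor Y Z) (f : Mor X Y),
  deflation f -> deflation g -> deflation (comp g f).
Hypothesis R2 : forall (B D D' : C) (g : Mor B D) (h : Mor D' D), deflation g ->
  exists P (p : Mor P D') (q : Mor P B), is_pullback h g p q /\ deflation p.

Variable SA : C -> Prop.
Hypothesis SA_inhabited : exists X, SA X.
Hypothesis A1 : forall (A' A A'' : C) (f : Mor A' A) (g : Mor A A''), confl f g ->
  (SA A <-> SA A' /\ SA A'').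
Hypothesis A2 : forall (X A : C) (m : Mor X A), SA A ->
  exists A' (d : Mor X A') (i : Mor A' A), [/\ SA A', deflation d, inflation i & m = comp i d].
Hypothesis A3 : forall (X D A : C) (a : Mor X D) (b : Mor X A),
  inflation a -> deflation b -> SA A ->
  exists P (a' : Mor D P) (b' : Mor A P), [/\ is_pushout a b a' b', deflation a' & inflation b'].

(* The pullback of the deflation [idm 0] along [X -> 0] is [X] itself. *)
Lemma confl_zero_id (X : C) : confl (0 : Mor zero_ob X) (idm X).
Proof.
have [P [p [q [[E univ] [L [k Ck]]]]]] := R2 (0 : Mor X zero_ob) R0.
have E0 : comp (0 : Mor X zero_ob) (idm X) = comp (idm zero_ob) (0 : Mor X zero_ob).
  by rewrite comp0l comp0r.
have [u [[pu _] _]] := univ X (idm X) 0 E0.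
have [v [_ v_uniq]] := univ P p q E.
have up : comp u p = idm P.
  rewrite (v_uniq (comp u p)); last 2 first.
  - by rewrite comp_assoc pu comp_id_l.
  - by rewrite (zero_ob_term q) comp0l.
  by rewrite (v_uniq (idm P)) // comp_id_r.
have := confl_comp_iso Ck up pu; rewrite pu => Ck'.
exact: confl_of_kernel Ck' (kernel0_id X).
Qed.

Lemma SA_zero : SA zero_ob.
Proof. by have [X SX] := SA_inhabited; case/(A1 (confl_zero_id X)): SX. Qed.

Lemma A_deflation_id (X : C) : A_deflation SA (idm X).
Proof. by exists zero_ob, 0; split; [apply: confl_zero_id | apply: SA_zero]. Qed.

Lemma A_inflation_id (X : C) : A_inflation SA (idm X).
Proof.
have [A' [d [i [SA' Dd Ii E]]]] := A2 (0 : Mor X zero_ob) SA_zero.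
have d0 : d = 0 by apply: (inflation_mono Ii); rewrite -E comp0r; apply: zero_ob_term.
exists A', d; split=> //; apply: deflation_kernel_confl Dd _.
split=> [|T h _]; first by rewrite d0 comp0l.
by exists h; split=> [|u]; rewrite comp_id_l.
Qed.

Lemma A_deflation_pullback (B D D' : C) (d : Mor B D) (h : Mor D' D) :
  A_deflation SA d ->
  exists P (p : Mor P D') (q : Mor P B), is_pullback h d p q /\ A_deflation SA p.
Proof.
case=> K [k [Cd SK]].
have [P [p [q [PB Dp]]]] := R2 h (ex_intro _ K (ex_intro _ k Cd)).
have [k' Kk'] := pullback_kernel (confl_kernel Cd) PB.
by exists P, p, q; split=> //; exists K, k'; split=> //; apply: deflation_kernel_confl.
Qed.

Lemma A_deflation_comp (X Y Z : C) (d1 : Mor X Y) (d2 : Mor Y Z) :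
  A_deflation SA d1 -> A_deflation SA d2 -> A_deflation SA (comp d2 d1).
Proof.
move=> Ad1 [K2 [k2 [C2 SK2]]].
have Dd1 : deflation d1 by case: Ad1 => K1 [k1 [C1 _]]; exists K1, k1.
have Dd : deflation (comp d2 d1) by apply: R1 Dd1 _; exists K2, k2.
have [P [p [q [PB [K1 [k [Ck SK1]]]]]]] := A_deflation_pullback k2 Ad1.
have SP : SA P by apply/(A1 Ck).
exists P, q; split=> //.
exact: deflation_kernel_confl Dd (pullback_kernel_leg (confl_kernel C2) (pullback_sym PB)).
Qed.

Lemma A_inflation_comp (X Y Z : C) (i1 : Mor X Y) (i2 : Mor Y Z) :
  A_inflation SA i1 -> A_inflation SA i2 -> A_inflation SA (comp i2 i1).
Proof.
move=> [A [c1 [C1 SA_A]]] [B [c2 [C2 SA_B]]].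
have Ii2 : inflation i2 by exists B, c2.
have Dc1 : deflation c1 by exists X, i1.
have [P [a' [b' [PO Da' Ib']]]] := A3 Ii2 Dc1 SA_A.
have Ka' := pushout_kernel C2 PO (inflation_mono Ib') (confl_kernel C1).
have [r [_ _ Kr]] := pushout_cokernel C2 PO.
exists P, a'; split; first exact: deflation_kernel_confl Da' Ka'.
exact/(A1 (inflation_cokernel_confl Ib' Kr)).
Qed.

Lemma deflation_of_epi (Y A : C) (w : Mor Y A) : SA A -> epi w -> deflation w.
Proof.
move=> SA_A Ew.
have [A' [e [m [_ [K [k Ck]] Im E]]]] := A2 w SA_A.
have Em : epi m by apply: (@epi_of_comp _ _ _ _ e); rewrite -E.
exists K, k; rewrite E.
apply: (confl_iso Ck (iso_id _) (iso_id _) (inflation_epi_iso Im Em)).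
- by rewrite comp_id_l comp_id_r.
- by rewrite comp_id_r.
Qed.

(* Its cokernel is induced by [cj], as Z/X = P/(X + A') = A/A'. *)
Lemma A_inflation_ker_coker (A' P Z X A A'' : C) (b' : Mor A' P) (r : Mor P Z)
    (u : Mor X P) (s : Mor P A) (j : Mor A' A) (cj : Mor A A'') :
  confl b' r -> confl u s -> confl j cj -> SA A'' -> comp s b' = j ->
  A_inflation SA (comp r u).
Proof.
move=> Cr Cs Cj SA'' sb'.
have cjsb'0 : comp (comp cj s) b' = 0 by rewrite -comp_assoc sb' (confl_comp0 Cj).
have [w wr] := cokernel_desc (confl_cokernel Cr) cjsb'0.
have Dw : deflation w.
  apply: deflation_of_epi SA'' _; apply: (@epi_of_comp _ _ _ _ r); rewrite wr.
  exact: epi_comp (confl_epi Cs) (confl_epi Cj).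
have Mru : mono (comp r u).
  apply: mono_from_eq0 => T x; rewrite -comp_assoc.
  case/(kernel_lift (confl_kernel Cr)) => z Ez.
  have jz0 : comp j z = 0.
    by rewrite -sb' -comp_assoc Ez comp_assoc (confl_comp0 Cs) comp0l.
  have z0 : z = 0 := mono_eq0 (confl_mono Cj) jz0.
  by apply: (mono_eq0 (confl_mono Cs)); rewrite -Ez z0 comp0r.
exists A'', w; split=> //; apply: deflation_kernel_confl Dw _.
apply: kernel_of_deflation_cover Mru _ _.
  by rewrite comp_assoc wr -comp_assoc (confl_comp0 Cs) comp0r.
move=> T h wh0.
have [Q [p [g [[E _] Dp]]]] := R2 h (ex_intro _ A' (ex_intro _ b' Cr)).
have cjsg0 : comp cj (comp s g) = 0.
  by rewrite comp_assoc -wr -comp_assoc -E comp_assoc wh0 comp0l.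
have [g1 Eg1] := kernel_lift (confl_kernel Cj) cjsg0.
have sg0 : comp s (g - comp b' g1) = 0 by rewrite compBr comp_assoc sb' Eg1 subrr.
have [g2 Eg2] := kernel_lift (confl_kernel Cs) sg0.
exists Q, p, g2; split=> //.
by rewrite -comp_assoc Eg2 compBr comp_assoc (confl_comp0 Cr) comp0l subr0 E.
Qed.

(* Factor [c k] by (A2) as [j e] and push [k] out along [e] to [q : Y -> P].
   The new deflation is the pullback of [q] along the kernel [u] of the induced
   [s : P -> A], and the new inflation is [u] followed by [P -> Z]. *)
Lemma A_inflation_deflation_swap (X Y Z : C) (i : Mor X Y) (d : Mor Y Z) :
  A_inflation SA i -> A_deflation SA d ->
  exists M (d' : Mor X M) (i' : Mor M Z),
    [/\ A_deflation SA d', A_inflation SA i' & comp d i = comp i' d'].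
Proof.
move=> [A [c [Ci SA_A]]] [K [k [Cd SK]]].
have [A' [e [j [SA' [K' [k' Ck']] [A'' [cj Cj]] Ecj]]]] := A2 (comp c k) SA_A.
have Ik : inflation k by exists Z, d.
have De : deflation e by exists K', k'.
have [P [q [b' [PO Dq Ib']]]] := A3 Ik De SA'.
have [r [rq _ Kr]] := pushout_cokernel Cd PO.
have [s [[sq sb'] _]] := PO.2 A c j Ecj.
have [X' [u Cs]] : deflation s.
  apply: deflation_of_epi SA_A _; apply: (@epi_of_comp _ _ _ _ q).
  by rewrite sq; apply: confl_epi Ci.
have Aq : A_deflation SA q.
  exists K', (comp k k'); split; last by case/(A1 Ck'): SK.
  apply: deflation_kernel_confl Dq _.
  exact: pushout_kernel Cd PO (inflation_mono Ib') (confl_kernel Ck').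
have [Q [p [g [PB [L [l [Cp SL]]]]]]] := A_deflation_pullback u Aq.
have Kg : is_kernel g c.
  by rewrite -sq; apply: pullback_kernel_leg (confl_kernel Cs) (pullback_sym PB).
have [phi [[psi [psiphi phipsi]] gphi]] := kernel_unique (confl_kernel Ci) Kg.
exists X', (comp p phi), (comp r u); split.
- by exists L, (comp psi l); split=> //; apply: confl_comp_iso Cp phipsi psiphi.
- have [_ SA''] := (A1 Cj).1 SA_A.
  exact: A_inflation_ker_coker (inflation_cokernel_confl Ib' Kr) Cs Cj SA'' sb'.
- by rewrite -rq -gphi -!comp_assoc (comp_assoc q) -PB.1 !comp_assoc.
Qed.

Definition A_factorization (X Y : C) (s : Mor X Y) :=
  exists M (d : Mor X M) (i : Mor M Y),
    [/\ A_deflation SA d, A_inflation SA i & s = comp i d].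

Lemma weak_iso_factorization (X Y : C) (s : Mor X Y) :
  weak_iso SA s -> A_factorization s.
Proof.
elim=> {X Y s} [X Y f Af | X Y f Af | X Y Z g f _ [M [d [i [Ad Ai ->]]]] _].
- by exists X, (idm X), f; split; rewrite ?comp_id_r //; apply: A_deflation_id.
- by exists Y, f, (idm Y); split; rewrite ?comp_id_l //; apply: A_inflation_id.
move=> [N [d2 [i2 [Ad2 Ai2 ->]]]].
have [M' [d' [i' [Ad' Ai' E]]]] := A_inflation_deflation_swap Ai Ad2.
exists M', (comp d' d), (comp i2 i'); split.
- exact: A_deflation_comp Ad Ad'.
- exact: A_inflation_comp Ai' Ai2.
- by rewrite -!comp_assoc (comp_assoc d2) E !comp_assoc.
Qed.

Lemma weak_iso_admissible (X Y : C) (s : Mor X Y) : weak_iso SA s -> admissible s.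
Proof.
move=> /weak_iso_factorization [M [d [i [[K [k [Cd _]]] [A [c [Ci _]]] ->]]]].
by exists M, d, i; split; [exists K, k | split=> //; exists A, c].
Qed.

Lemma A_inflation_pullback (M W Z : C) (i : Mor M W) (f : Mor Z W) :
  A_inflation SA i ->
  exists Z' (t : Mor Z' Z) (g : Mor Z' M), is_pullback f i t g /\ A_inflation SA t.
Proof.
case=> A [c [Ci SA_A]].
have [A' [e [m [SA' [Z' [t Ct]] Im E]]]] := A2 (comp c f) SA_A.
have cft0 : comp c (comp f t) = 0.
  by rewrite comp_assoc E -comp_assoc (confl_comp0 Ct) comp0r.
have [g Eg] := kernel_lift (confl_kernel Ci) cft0.
exists Z', t, g; split; last by exists A', e.
split=> [|Q t' g' Et']; first by rewrite Eg.
have et'0 : comp e t' = 0.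
  apply: (mono_eq0 (inflation_mono Im)).
  by rewrite comp_assoc -E -comp_assoc Et' comp_assoc (confl_comp0 Ci) comp0l.
have [v Ev] := kernel_lift (confl_kernel Ct) et'0.
exists v; split=> [|v' Ev' _]; last by apply: (confl_mono Ct); rewrite Ev' Ev.
by split=> //; apply: (confl_mono Ci); rewrite comp_assoc Eg -comp_assoc Ev.
Qed.

Lemma weak_iso_pullback (Z W Y : C) (f : Mor Z W) (s : Mor Y W) :
  weak_iso SA s ->
  exists X (t : Mor X Z) (g : Mor X Y), weak_iso SA t /\ is_pullback f s t g.
Proof.
move=> /weak_iso_factorization [M [d [i [Ad Ai ->]]]].
have [Z' [t [g [PBi Ait]]]] := A_inflation_pullback f Ai.
have [P [p [q [PBd Adp]]]] := A_deflation_pullback g Ad.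
exists P, (comp t p), q; split; last exact: pullback_paste PBi PBd.
by apply: wi_comp; [apply: wi_defl | apply: wi_infl].
Qed.

Lemma weak_iso_equalize (X Y V : C) (f g : Mor X Y) (s : Mor Y V) :
  weak_iso SA s -> comp s f = comp s g ->
  exists X' (t : Mor X' X), weak_iso SA t /\ comp f t = comp g t.
Proof.
move=> /weak_iso_factorization [M [d [i [[K [k [Cd SK]]] [A [c [Ci _]]] ->]]]] E.
have dfg0 : comp d (f - g) = 0.
  by apply: (mono_eq0 (confl_mono Ci)); rewrite !compBr !comp_assoc E subrr.
have [h Eh] := kernel_lift (confl_kernel Cd) dfg0.
have [A' [e [m [SA' [Z' [t Ct]] _ Eh']]]] := A2 h SK.
exists Z', t; split; first by apply: wi_infl; exists A', e.
apply/eqP; rewrite -subr_eq0 -compBl -Eh Eh' -!comp_assoc (confl_comp0 Ct).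
by rewrite !comp0r.
Qed.

End Percolating.

Theorem mainTheorem1 (C : ConflCat) (SA : C -> Prop) :
  deflation_exact C -> adm_deflation_percolating SA ->
  (forall (X Y : C) (s : Mor X Y), weak_iso SA s <-> weak_iso SA s /\ admissible s) /\
  right_mult_system_pullback (@weak_iso C SA).
Proof.
move=> [R0 R1 R2] [SA_inhabited A1 A2 A3]; split.
  move=> X Y s; split=> [ws | []//]; split=> //.
  exact: weak_iso_admissible ws.
split.
- by move=> X; apply/wi_defl/A_deflation_id.
- by move=> X Y Z g f; apply: wi_comp.
- move=> Z W Y f s ws.
  have [X [t [g [wt PB]]]] := weak_iso_pullback R0 R1 R2 SA_inhabited A1 A2 A3 f ws.
  by exists X, t, g; split=> //; case: PB.
- by move=> X Y V f g s; apply: weak_iso_equalize.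
Qed.
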